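(* Let $\Delta\geq 3$ be an integer and let $G$ be a triangle-free $\Delta$-regular graph. Then $$\alpha(G)\geq \frac{1}{2}\left(1+\frac{(\Delta-1)(\Delta+1)}{2^{\Delta}\Delta^2+(\Delta-1)(\Delta+1)}\right)\mathrm{diss}(G).$$
   Context: All graphs are finite, simple and undirected. $\alpha(G)$ is the independence number. A set $D$ of vertices is a dissociation set if the induced subgraph $G[D]$ has maximum degree at most $1$; $\mathrm{diss}(G)$ is the maximum order of a dissociation set. *)

From mathcomp Require Import all_boot all_order all_algebra.
Set Implicit Arguments. Unset Strict Implicit. Unset Printing Implicit Defensive.

Definition simple_graph (T : finType) (e : rel T) : Prop :=
  symmetric e /\ irreflexive e.

Definition nbhd (T : finType) (e : rel T) (v : T) : {set T} := [set w | e v w].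
Definition regular (T : finType) (e : rel T) (d : nat) : Prop :=
  forall v : T, #|nbhd e v| = d.

Definition triangle_free (T : finType) (e : rel T) : Prop :=
  forall x y z : T, ~~ [&& e x y, e y z & e z x].

Definition independent (T : finType) (e : rel T) (S : {set T}) : bool :=
  [forall x in S, forall y in S, ~~ e x y].

Definition dissociation (T : finType) (e : rel T) (D : {set T}) : bool :=
  [forall x in D, #|D :&: nbhd e x| <= 1].

Definition alpha (T : finType) (e : rel T) : nat :=
  \max_(S : {set T} | independent e S) #|S|.
Definition diss (T : finType) (e : rel T) : nat :=
  \max_(D : {set T} | dissociation e D) #|D|.

From mathcomp Require Import all_boot all_order all_algebra zify ring.
Set Implicit Arguments. Unset Strict Implicit. Unset Printing Implicit Defensive.

(* Fix a maximum dissociation set D; it splits into the set L of vertices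
   isolated in G[D] and M edges of G[D].  Join two vertices x, y in an auxiliary
   graph when they are adjacent or x, y are adjacent to the two ends of one such
   edge; triangle-freeness makes this graph loopless, and its maximum degree is
   at most Delta + Delta^2.  A greedy independent set X of it, chosen among the
   set U of vertices outside D with no neighbour in L, has
   |U| <= (Delta^2 + Delta + 1) |X|, and L, X and one end without neighbours in X
   of every edge of G[D] form an independent set: alpha >= |L| + |X| + M.
   Counting the Delta - 1 edges from each matched vertex to the outside of D
   gives 2M (Delta - 1) <= Delta |U| + Delta^2 |L|, and the two estimates combine
   into the bound using (Delta + 1)^2 <= 2^(Delta + 1). *)

Lemma card_bigcup_le (T I : finType) (P : {pred I}) (F : I -> {set T}) :
  #|\bigcup_(i in P) F i| <= \sum_(i in P) #|F i|.
Proof.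
elim/big_rec2: _ => [|i n S _ leSn]; first by rewrite cards0.
exact: leq_trans (leq_card_setU _ _).1 (leq_add _ leSn).
Qed.

Lemma card_set_in_pred (T : finType) (A : {set T}) (q : pred T) :
  #|[set x in A | q x]| = \sum_(x in A) q x.
Proof.
rewrite -sum1_card big_mkcond [RHS]big_mkcond; apply: eq_bigr => x _.
by rewrite inE; case: (x \in A); case: (q x).
Qed.

Lemma card_disjoint_setU (T : finType) (A B : {set T}) :
  [disjoint A & B] -> #|A :|: B| = #|A| + #|B|.
Proof. by move=> dAB; apply/eqP; rewrite (leq_card_setU A B).2. Qed.

Lemma independentP (T : finType) (h : rel T) (S : {set T}) :
  reflect {in S &, forall x y, ~~ h x y} (independent h S).
Proof.
apply: (iffP forall_inP) => [hS x y xS yS | hS x xS].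
  exact: (forall_inP (hS x xS)).
by apply/forall_inP => y; apply: hS.
Qed.

Lemma greedy_independent (T : finType) (h : rel T) (d : nat) (A : {set T}) :
  symmetric h -> irreflexive h ->
  {in A, forall a, #|[set y in A | h a y]| <= d} ->
  exists X : {set T}, [/\ X \subset A, independent h X & #|A| <= d.+1 * #|X|].
Proof.
move=> h_sym h_irr; have [n] := ubnP #|A|; elim: n A => // n IHn A ltAn degA.
have [->|[a aA]] := set_0Vmem A.
  exists set0; rewrite sub0set cards0 muln0; split=> //.
  by apply/independentP => x; rewrite inE.
pose Na := a |: [set y in A | h a y].
have NaA : Na \subset A.
  by apply/subsetP => y; rewrite !inE => /orP[/eqP->|/andP[]].
have cardNa : #|Na| <= d.+1 by rewrite cardsU1 -add1n leq_add ?leq_b1 ?degA.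
have [X [XA indX cardX]] : exists X : {set T},
    [/\ X \subset A :\: Na, independent h X & #|A :\: Na| <= d.+1 * #|X|].
  apply: IHn => [|b /setDP[bA _]].
    rewrite -ltnS; apply: leq_trans ltAn; rewrite ltnS proper_card //; apply/properP.
    by split; [exact: subsetDl | exists a; rewrite // !inE eqxx].
  apply: leq_trans (degA b bA); apply: subset_leq_card; apply/subsetP => y.
  by rewrite !inE => /andP[/andP[_ ->] ->].
have aNh y : y \in X -> ~~ h a y.
  by move/(subsetP XA); rewrite !inE => /andP[/norP[_]]; rewrite negb_and => /orP[/negPf->|].
have aX : a \notin X by apply/negP => /(subsetP XA); rewrite !inE eqxx.
exists (a |: X); split.
- by rewrite subUset sub1set aA (subset_trans XA) ?subsetDl.
- apply/independentP => x y; rewrite !inE => /orP[/eqP->|xX] /orP[/eqP->|yX].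
  + by rewrite h_irr.
  + exact: aNh.
  + by rewrite h_sym aNh.
  + by move/independentP: indX; apply.
- rewrite cardsU1 aX -(cardsID Na A) (setIidPr NaA) mulnDr muln1.
  exact: leq_add.
Qed.

Lemma involution_transversal (T : finType) (A : {set T}) (f : T -> T) (P : pred T) :
  {in A, forall u, f u \in A} -> {in A, cancel f f} -> {in A, forall u, f u != u} ->
  {in A, forall u, P u || P (f u)} ->
  exists Y : {set T},
    [/\ Y \subset A, {subset Y <= P}, {in Y, forall u, f u \notin Y} & #|A| = 2 * #|Y|].
Proof.
move=> fA fK f_neq PfP.
pose Y := [set u in A | P u && (~~ P (f u) || (enum_rank u < enum_rank (f u))%N)].
have YA : Y \subset A by apply/subsetP => u; rewrite inE => /andP[].
have fY u : u \in A -> (f u \in Y) = (u \notin Y).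
  move=> uA; rewrite !inE fA // fK // uA /=.
  have : (enum_rank u : nat) != enum_rank (f u).
    apply/negP => /eqP/val_inj/enum_rank_inj ufu.
    by move: (f_neq u uA); rewrite -ufu eqxx.
  by move: (PfP u uA); case: (P u); case: (P (f u)) => //= _; case: ltngtP.
exists Y; split=> // [u | u uY|].
- by rewrite inE => /and3P[].
- by rewrite fY ?negbK // (subsetP YA).
have -> : A = Y :|: f @: Y.
  apply/setP => u; rewrite inE; apply/idP/orP => [uA|[/(subsetP YA) //|]].
    have [uY|uY] := boolP (u \in Y); [by left | right].
    by apply/imsetP; exists (f u); rewrite ?fK // fY.
  by case/imsetP => v /(subsetP YA) vA ->; rewrite fA.
rewrite card_disjoint_setU ?card_in_imset ?addnn ?mul2n //.
  by move=> u v /(subsetP YA) uA /(subsetP YA) vA fuv; rewrite -(fK u) // fuv fK.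
rewrite disjoint_sym disjoint_subset; apply/subsetP => _ /imsetP[u uY ->].
by rewrite inE fY ?negbK // (subsetP YA).
Qed.

Lemma sqrS_le_exp2S d : 3 <= d -> d.+1 ^ 2 <= 2 ^ d.+1.
Proof.
elim: d => // d IHd; rewrite ltnS leq_eqVlt => /orP[/eqP<- // | d_ge3].
have := IHd d_ge3; rewrite !expnS !expn0 !muln1; move: (2 ^ d) => p; nia.
Qed.

Lemma poly_le_exp2_weight d : 3 <= d ->
  (d + 1) * (d * (d + d * d).+1) <= 2 * (2 ^ d * d ^ 2 + (d - 1) * (d + 1)).
Proof.
move=> d_ge3; have := sqrS_le_exp2S d_ge3; rewrite !expnS !expn0 !muln1.
move: (2 ^ d) => p /(leq_mul (leqnn (d * d))); nia.
Qed.

Lemma count_tradeoff d t m g x : 3 <= d ->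
  m * (d - 1) <= d * g + d * d * t -> g <= (d + d * d).+1 * x ->
  (d - 1) * (d + 1) * m <= 2 ^ d * d ^ 2 * t + 2 * (2 ^ d * d ^ 2 + (d - 1) * (d + 1)) * x.
Proof.
move=> d_ge3 le_m le_g; have d_lt_exp2 := ltn_expl d (ltnSn 1).
have := poly_le_exp2_weight d_ge3; have := leq_mul (leqnn (d + 1)) le_m.
rewrite !expnS !expn0 !muln1; move: (2 ^ d) d_lt_exp2 => p; nia.
Qed.

Lemma alpha_ge_card (T : finType) (e : rel T) (S : {set T}) :
  independent e S -> #|S| <= alpha e.
Proof. exact: (leq_bigmax_cond (F := fun S : {set T} => #|S|)). Qed.

Lemma diss_attained (T : finType) (e : rel T) :
  exists2 D : {set T}, dissociation e D & diss e = #|D|.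
Proof.
have [|D D_diss maxD] := eq_bigmax_cond (fun D : {set T} => #|D|) (A := dissociation e).
  apply/card_gt0P; exists set0.
  by rewrite unfold_in; apply/forall_inP => x; rewrite inE.
by exists D.
Qed.

Section DissociationSet.
Variables (T : finType) (e : rel T) (Delta : nat).
Hypotheses (e_sym : symmetric e) (e_irr : irreflexive e)
  (e_reg : regular e Delta) (e_tf : triangle_free e).
Variable D : {set T}.
Hypothesis D_diss : dissociation e D.

Local Notation N := (nbhd e).

Definition lone := [set u in D | D :&: N u == set0].
Definition paired := [set u in D | #|D :&: N u| == 1].
Definition partner u := odflt u [pick v in D :&: N u].

Lemma lone_sub_D : lone \subset D.
Proof. by apply/subsetP => u; rewrite inE => /andP[]. Qed.

Lemma paired_eq : paired = D :\: lone.
Proof.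
apply/setP => u; rewrite !inE -cards_eq0.
case uD: (u \in D); rewrite ?andbF //=.
by have := forall_inP D_diss u uD; case: #|_| => [|[|]].
Qed.

Lemma card_lone_paired : #|D| = #|lone| + #|paired|.
Proof.
by rewrite paired_eq -(cardsID lone D) (setIidPr lone_sub_D).
Qed.

Lemma lone_nonadj u v : u \in lone -> v \in D -> ~~ e u v.
Proof.
rewrite inE => /andP[_ /eqP DNu0] vD; apply/negP => euv.
by have := in_set0 v; rewrite -DNu0 !inE vD euv.
Qed.

Lemma pairedE u : u \in paired -> D :&: N u = [set partner u].
Proof.
rewrite inE => /andP[_ /cards1P[v DNu]]; rewrite /partner DNu.
by case: pickP => [w|/(_ v)]; rewrite inE ?eqxx // => /eqP->.
Qed.

Lemma partnerP u : u \in paired -> partner u \in D /\ e u (partner u).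
Proof.
by move/pairedE => DNu; have := set11 (partner u); rewrite -DNu !inE => /andP[].
Qed.

Lemma partner_uniq u v : u \in paired -> v \in D -> e u v -> v = partner u.
Proof.
by move=> /pairedE DNu vD euv; apply/set1P; rewrite -DNu !inE vD.
Qed.

Lemma partner_paired u : u \in paired -> partner u \in paired.
Proof.
move=> uP; have [pD eup] := partnerP uP; have := uP.
rewrite !paired_eq !in_setD pD andbT => /andP[_ uD].
by apply: contraL eup => /lone_nonadj/(_ uD); rewrite e_sym.
Qed.

Lemma paired_sub_D : paired \subset D.
Proof. by rewrite paired_eq subsetDl. Qed.

Lemma partnerK : {in paired, cancel partner partner}.
Proof.
move=> u uP; have [pD eup] := partnerP uP; symmetry.
by apply: partner_uniq; rewrite ?partner_paired ?(subsetP paired_sub_D) // e_sym.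
Qed.

Lemma partner_neq : {in paired, forall u, partner u != u}.
Proof.
by move=> u /partnerP[_]; apply: contraTneq => ->; rewrite e_irr.
Qed.

Definition unblocked := [set w in ~: D | [forall i in lone, ~~ e w i]].

Lemma unblockedP w : w \in unblocked -> w \notin D /\ {in lone, forall i, ~~ e w i}.
Proof. by rewrite inE in_setC => /andP[wD /forall_inP]. Qed.

(* Adjacent, or seeing the two ends of one edge of G[D]: a conflict-free set
   outside D leaves at least one end of every such edge without neighbours in it. *)
Definition conflict x y := e x y || [exists u in paired, e x u && e (partner u) y].

Lemma conflict_sym : symmetric conflict.
Proof.
suff conflictC x y : conflict x y -> conflict y x by move=> x y; apply/idP/idP; apply: conflictC.
case/orP => [exy | /exists_inP[u uP /andP[exu epy]]]; first by rewrite /conflict e_sym exy.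
apply/orP; right; apply/exists_inP; exists (partner u); first exact: partner_paired.
by rewrite e_sym epy partnerK // e_sym.
Qed.

Lemma conflict_irr : irreflexive conflict.
Proof.
move=> x; rewrite /conflict e_irr /=; apply/exists_inP => -[u uP /andP[exu epx]].
by have := e_tf x u (partner u); rewrite exu epx (partnerP uP).2.
Qed.

Lemma conflict_deg x : #|[set y in unblocked | conflict x y]| <= Delta + Delta * Delta.
Proof.
have reach : [set y in unblocked | conflict x y] \subset
    N x :|: \bigcup_(u in paired :&: N x) N (partner u).
  apply/subsetP => y; rewrite !inE => /andP[_ /orP[exy | /exists_inP[u uP /andP[exu epy]]]].
    by rewrite exy.
  apply/orP; right; apply/bigcupP; exists u; first by rewrite in_setI uP inE.
  by rewrite inE.
apply: leq_trans (subset_leq_card reach) _.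
apply: leq_trans (leq_card_setU _ _).1 _; rewrite e_reg leq_add2l.
apply: leq_trans (card_bigcup_le _ _) _.
rewrite (eq_bigr (fun _ => Delta)) => [|u _]; last exact: e_reg.
by rewrite sum_nat_const mulnC leq_mul2l -(e_reg x) subset_leq_card ?subsetIr ?orbT.
Qed.

Lemma sum_adj i : \sum_w e w i = Delta.
Proof.
rewrite -(e_reg i) -sum1_card [RHS]big_mkcond; apply: eq_bigr => w _.
by rewrite inE e_sym; case: (e i w).
Qed.

Lemma paired_out_deg u : u \in paired -> \sum_(w in ~: D) e u w = Delta - 1.
Proof.
move=> uP; rewrite -card_set_in_pred.
have := cardsID D (N u); rewrite setIC pairedE // cards1 e_reg => <-.
by rewrite addKn; apply: eq_card => w; rewrite !inE.
Qed.

Lemma paired_in_deg w : w \in ~: D ->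
  \sum_(u in paired) e u w <= Delta * (w \in unblocked) + Delta * \sum_(i in lone) e w i.
Proof.
move=> wD; have le_Delta : \sum_(u in paired) e u w <= Delta.
  rewrite -card_set_in_pred -(e_reg w) subset_leq_card //.
  by apply/subsetP => u; rewrite !inE e_sym => /andP[].
have [wU | wU] := boolP (w \in unblocked); first by rewrite muln1 (leq_trans le_Delta) ?leq_addr.
rewrite muln0 add0n; apply: leq_trans le_Delta _; rewrite leq_pmulr //.
move: wU; rewrite inE wD => /forall_inPn[i iL]; rewrite negbK => ewi.
by rewrite (bigD1 i) //= ewi.
Qed.

Lemma paired_edges :
  #|paired| * (Delta - 1) <= Delta * #|unblocked| + Delta * Delta * #|lone|.
Proof.
rewrite -sum_nat_const -(eq_bigr _ paired_out_deg) exchange_big /=.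
apply: leq_trans (_ : _ <= \sum_(w in ~: D)
    (Delta * (w \in unblocked) + Delta * \sum_(i in lone) e w i)) _.
  by apply: leq_sum => w; apply: paired_in_deg.
rewrite big_split -!big_distrr /= -mulnA.
apply: leq_add; rewrite leq_mul2l; apply/orP; right.
  rewrite -card_set_in_pred subset_leq_card //.
  by apply/subsetP => w; rewrite inE => /andP[].
apply: leq_trans (_ : \sum_w \sum_(i in lone) e w i <= _).
  by rewrite [X in X <= _]big_mkcond leq_sum // => w _; case: ifP.
by rewrite exchange_big /= (eq_bigr _ (fun i _ => sum_adj i)) sum_nat_const mulnC.
Qed.

Lemma alpha_ge_lone_unblocked (X : {set T}) : X \subset unblocked -> independent conflict X ->
  2 * (#|lone| + #|X|) + #|paired| <= 2 * alpha e.
Proof.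
move=> XU /independentP indX.
have XnD x : x \in X -> x \notin D by move/(subsetP XU)/unblockedP=> [].
have Xnlone x i : x \in X -> i \in lone -> ~~ e x i.
  by move/(subsetP XU)/unblockedP=> [_]; apply.
pose noX u := [forall x in X, ~~ e u x].
have pair_noX u : u \in paired -> noX u || noX (partner u).
  move=> uP; apply/contraT; rewrite negb_or.
  case/andP => /forall_inPn[x xX]; rewrite negbK => eux /forall_inPn[y yX]; rewrite negbK => epy.
  have := indX x y xX yX; rewrite /conflict negb_or => /andP[_ /exists_inPn/(_ u uP)].
  by rewrite e_sym eux epy.
have [Y [YP YnoX Yfree cardP]] :=
  involution_transversal partner_paired partnerK partner_neq pair_noX.
have YD : Y \subset D := subset_trans YP paired_sub_D.
pose S := lone :|: X :|: Y.
have S_cases v : v \in S -> [\/ v \in lone, v \in X | v \in Y].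
  by rewrite !in_setU -orbA => /or3P.
have lone_nonadjS i v : i \in lone -> v \in S -> ~~ e i v.
  move=> iL /S_cases[vL|vX|vY].
  - exact/lone_nonadj/(subsetP lone_sub_D).
  - by rewrite e_sym Xnlone.
  - exact/lone_nonadj/(subsetP YD).
have X_nonadjS x v : x \in X -> v \in S -> ~~ e x v.
  move=> xX /S_cases[vL|vX|vY]; first exact: Xnlone.
    by have := indX x v xX vX; rewrite /conflict negb_or => /andP[].
  by rewrite e_sym; apply: (forall_inP (YnoX v vY)).
have Y_nonadjS y v : y \in Y -> v \in S -> ~~ e y v.
  move=> yY /S_cases[vL|vX|vY]; first by rewrite e_sym lone_nonadj // (subsetP YD).
    exact: (forall_inP (YnoX y yY)).
  apply: contra (Yfree y yY) => eyv.
  by rewrite -(partner_uniq (subsetP YP y yY) (subsetP YD v vY) eyv).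
have indS : independent e S.
  apply/independentP => x y xS; have [xL|xX|xY] := S_cases x xS.
  - exact: lone_nonadjS.
  - exact: X_nonadjS.
  - exact: Y_nonadjS.
have cardS : #|S| = #|lone| + #|X| + #|Y|.
  rewrite !card_disjoint_setU //.
    rewrite disjoints_subset; apply/subsetP => i /(subsetP lone_sub_D) iD.
    by rewrite inE; apply: contraL iD; apply: XnD.
  rewrite disjoint_sym disjoints_subset; apply/subsetP => y yY.
  move: (subsetP YP y yY); rewrite paired_eq in_setD => /andP[yL yD].
  by rewrite in_setC in_setU negb_or yL; apply: contraL yD; apply: XnD.
have := alpha_ge_card indS; rewrite cardS cardP; lia.
Qed.

Lemma alpha_ge_weighted_D : 3 <= Delta ->
  (2 ^ Delta * Delta ^ 2 + 2 * ((Delta - 1) * (Delta + 1))) * #|D| <=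
  2 * (2 ^ Delta * Delta ^ 2 + (Delta - 1) * (Delta + 1)) * alpha e.
Proof.
move=> Delta_ge3.
have [X [XU indX cardU]] :=
  greedy_independent conflict_sym conflict_irr (fun x _ => conflict_deg x).
have := count_tradeoff Delta_ge3 paired_edges cardU.
have := alpha_ge_lone_unblocked XU indX.
rewrite card_lone_paired.
set b := 2 ^ Delta * Delta ^ 2; set a := (Delta - 1) * (Delta + 1).
move=> /(leq_mul (leqnn (b + a))); nia.
Qed.

End DissociationSet.

Import GRing.Theory Num.Theory.
Local Open Scope ring_scope.

Lemma half_one_plus_ratio (A B M : nat) : (0 < B)%N ->
  (1 / 2 : rat) * (1 + A%:R / (B%:R + A%:R)) * M%:R =
  ((B + 2 * A) * M)%N%:R / (2 * (B + A))%N%:R.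
Proof.
move=> B_gt0; have BA_neq0 : B%:R + A%:R != 0 :> rat.
  by rewrite -natrD pnatr_eq0 -lt0n ltn_addr.
by rewrite !natrM !natrD; field.
Qed.

Theorem theorem2 (T : finType) (e : rel T) (Delta : nat) :
  (3 <= Delta)%N ->
  simple_graph e -> regular e Delta -> triangle_free e ->
  (alpha e)%:R >=
    (1 / 2 : rat) *
    (1 + ((Delta - 1)%:R * (Delta + 1)%:R) /
         ((2 ^ Delta * Delta ^ 2)%:R + (Delta - 1)%:R * (Delta + 1)%:R))
    * (diss e)%:R.
Proof.
move=> Delta_ge3 [e_sym e_irr] e_reg e_tf.
have [D D_diss ->] := diss_attained e.
have b_gt0 : (0 < 2 ^ Delta * Delta ^ 2)%N by rewrite muln_gt0 !expn_gt0 (leq_trans _ Delta_ge3).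
rewrite -natrM half_one_plus_ratio // ler_pdivrMr; last by rewrite ltr0n muln_gt0 ltn_addr.
rewrite -natrM ler_nat [leqRHS]mulnC.
exact: (alpha_ge_weighted_D e_sym e_irr e_reg e_tf D_diss).
Qed.
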